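(* Let $n\ge 1$ and let $P$ be the $n\times n$ permutation matrix of a permutation $\sigma\in S_n$. Then $P$ is the leaf matrix of at least one CNM of size $n$ if and only if $\sigma$ is irreducible.
   Context: A complete non-ambiguous matrix (CNM) of size $n$ is an $n\times n$ matrix $M=(m_{i,j})$ with entries in $\{0,1\}$ whose support $T=\{(i,j): m_{i,j}=1\}$ (whose elements are called vertices) satisfies: (1) $(1,1)\in T$; (2) for every $p=(i,j)\in T$ with $p\neq(1,1)$, exactly one of the following holds: there is $(i',j)\in T$ with $i'<i$, or there is $(i,j')\in T$ with $j'<j$; (3) every row and every column of $M$ contains at least one vertex; (4) define the parent of $p=(i,j)\neq(1,1)$ to be $(i',j)$ with $i'<i$ maximal if such a vertex exists, and otherwise $(i,j')$ with $j'<j$ maximal; then every vertex is the parent of either zero or exactly two vertices. A vertex with no children is a leaf. The leaf matrix $p(M)$ is obtained from $M$ by replacing all non-leaf vertices by $0$ (it is a permutation matrix). A permutation $\sigma\in S_n$ is irreducible if there is no $j$ with $1\le j<n$ such that $\sigma(\{1,\dots,j\})=\{1,\dots,j\}$; the permutation matrix of $\sigma$ has its $1$'s at positions $(i,\sigma(i))$. *)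

(* Indices are 0-based: row/column k of the paper is the
   ordinal k-1 : 'I_n. A {0,1}-matrix is represented as a bool matrix. *)
From mathcomp Require Import all_boot all_order all_algebra all_fingroup.
Set Implicit Arguments. Unset Strict Implicit. Unset Printing Implicit Defensive.

Section CNM.
Variable n : nat.
Implicit Types (M : 'M[bool]_n) (p q : 'I_n * 'I_n).

Definition vertex M p : bool := M p.1 p.2.

Definition is_origin p : bool := (val p.1 == 0%N) && (val p.2 == 0%N).

Definition has_above M p : bool := [exists i' : 'I_n, (i' < p.1) && M i' p.2].
Definition has_left M p : bool := [exists j' : 'I_n, (j' < p.2) && M p.1 j'].

Definition parent_of M q p : bool :=
  [&& vertex M p, vertex M q, ~~ is_origin p &
   if has_above M p then
     [&& q.2 == p.2, q.1 < p.1 &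
         [forall k : 'I_n, (q.1 < k < p.1) ==> ~~ M k p.2]]
   else
     [&& q.1 == p.1, q.2 < p.2 &
         [forall k : 'I_n, (q.2 < k < p.2) ==> ~~ M p.1 k]]].

Definition children M q : {set 'I_n * 'I_n} := [set p | parent_of M q p].

Definition is_CNM M : Prop :=
  (exists p, is_origin p && vertex M p) /\
  (* (2) *) (forall p, vertex M p -> ~~ is_origin p ->
               has_above M p (+) has_left M p) /\
  (forall i : 'I_n, exists j : 'I_n, M i j) /\
            (forall j : 'I_n, exists i : 'I_n, M i j) /\
  (forall q, vertex M q -> #|children M q| = 0%N \/ #|children M q| = 2%N).

Definition is_leaf M p : bool := vertex M p && (#|children M p| == 0%N).

Definition leaf_matrix M : 'M[bool]_n := \matrix_(i, j) is_leaf M (i, j).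

Definition perm_bmx (s : 'S_n) : 'M[bool]_n := \matrix_(i, j) (s i == j).

Definition irreducible_perm (s : 'S_n) : Prop :=
  ~ exists j : nat, [/\ (1 <= j)%N, (j < n)%N &
      s @: [set i : 'I_n | (i < j)%N] = [set i : 'I_n | (i < j)%N]].
End CNM.

From mathcomp Require Import all_boot all_order all_algebra all_fingroup.
Set Implicit Arguments. Unset Strict Implicit. Unset Printing Implicit Defensive.

(* A child of q lies either below q in its column (if it has a vertex above
   it) or to the right of q in its row, and each kind of child is unique.
   Hence the last vertex of a row, and the last vertex of a column, have at
   most one child, so they are leaves.  If the leaves form the graph of s,
   every vertex (i, c) therefore satisfies c <= s i and i <= s^-1 c.
   Should s fix {0, ..., j-1} with 0 < j < n, the first vertex (j, c) of row j
   has a vertex above it in some row i < j, so c <= s i < j, i.e. c = s k with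
   k < j; but then j <= s^-1 c = k, a contradiction.
   Conversely, any matrix containing (0, 0) and the graph of s, satisfying
   these two bounds and condition (2), is a CNM with leaf matrix s: a vertex
   (i, c) off the graph has exactly two children, the next vertex below it
   and the next one to its right.  Such a matrix is obtained by keeping in
   each column c the cell in the first row i with c <= s i, and in each row
   one more cell.  Irreducibility is exactly what prevents a cell other than
   (0, 0) from being both at the top of its column and at the left of its
   row, which would violate condition (2). *)

Lemma nearest_after_uniq n (P : pred 'I_n) (q a b : 'I_n) :
  q < a -> q < b -> P a -> P b ->
  (forall k : 'I_n, q < k < a -> ~~ P k) ->
  (forall k : 'I_n, q < k < b -> ~~ P k) -> a = b.
Proof.
move=> qa qb Pa Pb Na Nb; apply: val_inj; case: (ltngtP a b) => // ab.
- by have := Nb a; rewrite qa ab Pa => /(_ isT).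
- by have := Na b; rewrite qb ab Pb => /(_ isT).
Qed.

Section Children.
Variables (n : nat) (M : 'M[bool]_n).
Implicit Types (p q : 'I_n * 'I_n).

Lemma children_cases q p : p \in children M q ->
  [/\ vertex M p, vertex M q, ~~ is_origin p &
    has_above M p /\
      [/\ q.2 = p.2, q.1 < p.1 & forall k : 'I_n, q.1 < k < p.1 -> ~~ M k p.2]
    \/ ~~ has_above M p /\
      [/\ q.1 = p.1, q.2 < p.2 & forall k : 'I_n, q.2 < k < p.2 -> ~~ M p.1 k]].
Proof.
rewrite inE => /and4P [vp vq no H]; split => //.
move: H; case: ifP => ha /and3P [/eqP e lt /forallP F]; [left | right];
  by split=> //; split=> // k hk; have /implyP := F k; apply.
Qed.

Lemma children_below_uniq q p1 p2 :
  p1 \in children M q -> p2 \in children M q ->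
  has_above M p1 -> has_above M p2 -> p1 = p2.
Proof.
case/children_cases=> v1 _ _ [[_ [e1 l1 F1]] | [/negP //]].
case/children_cases=> v2 _ _ [[_ [e2 l2 F2]] | [/negP //]] _ _.
move: p1 p2 e1 e2 v1 v2 l1 l2 F1 F2 => [a1 b] [a2 b'] /= <- <- v1 v2 l1 l2 F1 F2.
by rewrite (nearest_after_uniq (P := fun k => M k q.2) l1 l2 v1 v2 F1 F2).
Qed.

Lemma children_right_uniq q p1 p2 :
  p1 \in children M q -> p2 \in children M q ->
  ~~ has_above M p1 -> ~~ has_above M p2 -> p1 = p2.
Proof.
case/children_cases=> v1 _ _ [[-> //] | [_ [e1 l1 F1]]].
case/children_cases=> v2 _ _ [[-> //] | [_ [e2 l2 F2]]] _ _.
move: p1 p2 e1 e2 v1 v2 l1 l2 F1 F2 => [a b1] [a' b2] /= <- <- v1 v2 l1 l2 F1 F2.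
by rewrite (nearest_after_uniq (P := fun k => M q.1 k) l1 l2 v1 v2 F1 F2).
Qed.

Lemma card_children_row_last q :
  (forall k : 'I_n, q.2 < k -> ~~ M q.1 k) -> #|children M q| <= 1.
Proof.
move=> last_q; apply/card_le1_eqP => p1 p2 C1 C2.
suff above : forall p, p \in children M q -> has_above M p.
  exact: children_below_uniq C2 C1 (above _ C2) (above _ C1).
move=> p /children_cases [vp _ _ [[] // | [_ [e l _]]]].
by move: vp; rewrite /vertex -e => vp; have := last_q _ l; rewrite vp.
Qed.

Lemma card_children_col_last q :
  (forall k : 'I_n, q.1 < k -> ~~ M k q.2) -> #|children M q| <= 1.
Proof.
move=> last_q; apply/card_le1_eqP => p1 p2 C1 C2.
suff right : forall p, p \in children M q -> ~~ has_above M p.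
  exact: children_right_uniq C2 C1 (right _ C2) (right _ C1).
move=> p /children_cases [vp _ _ [[_ [e l _]] | [] //]].
by move: vp; rewrite /vertex -e => vp; have := last_q _ l; rewrite vp.
Qed.

End Children.

Section LeafPermBounds.
Variables (n : nat) (s : 'S_n) (M : 'M[bool]_n).
Hypotheses (cnmM : is_CNM M) (leafM : leaf_matrix M = perm_bmx s).

Lemma CNM_perm_leaf q :
  vertex M q -> #|children M q| <= 1 -> s q.1 = q.2.
Proof.
have [_ [_ [_ [_ ch02]]]] := cnmM; move=> vq ch1.
have ch0 : #|children M q| = 0 by case: (ch02 q vq) => // ch2; rewrite ch2 in ch1.
have : leaf_matrix M q.1 q.2 by rewrite mxE /is_leaf -surjective_pairing vq ch0.
by rewrite leafM mxE => /eqP.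
Qed.

Lemma CNM_col_le_perm i c : M i c -> c <= s i.
Proof.
move=> Mic; have [c' Mc' c'_max] := arg_maxnP (fun k : 'I_n => val k) Mic.
rewrite (@CNM_perm_leaf (i, c')) //; first exact: c'_max.
apply: card_children_row_last => k /= c'k; apply/negP => Mk.
by have := c'_max k Mk; rewrite /= leqNgt c'k.
Qed.

Lemma CNM_row_le_permV i c : M i c -> i <= (s^-1)%g c.
Proof.
move=> Mic.
have [r Mr r_max] := @arg_maxnP _ i (fun k => M k c) (fun k : 'I_n => val k) Mic.
suff <- : s r = c by rewrite permK; exact: r_max.
apply: (@CNM_perm_leaf (r, c)) => //.
apply: card_children_col_last => k /= rk; apply/negP => Mk.
by have := r_max k Mk; rewrite /= leqNgt rk.
Qed.

Lemma CNM_perm_irreducible : irreducible_perm s.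
Proof.
have [_ [xor2 [row_vertex _]]] := cnmM; case=> j [j_gt0 jn fix_j].
pose J := Ordinal jn; have [c MJc] := row_vertex J.
have [c0 MJc0 c0_min] := arg_minnP (fun k : 'I_n => val k) MJc.
have no_left : ~~ has_left M (J, c0).
  apply/existsP => -[k /andP [kc0 Mk]].
  by have := c0_min k Mk; rewrite /= leqNgt kc0.
have not_origin : ~~ is_origin (J, c0) by rewrite negb_and -lt0n j_gt0.
have := xor2 (J, c0) MJc0 not_origin; rewrite (negbTE no_left) addbF.
case/existsP=> i /andP [iJ Mi].
have si_j : s i < j.
  have : s i \in s @: [set k : 'I_n | k < j] by rewrite imset_f ?inE.
  by rewrite fix_j inE.
have /imsetP [k] : c0 \in s @: [set k : 'I_n | k < j].
  by rewrite fix_j inE (leq_ltn_trans (CNM_col_le_perm Mi) si_j).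
rewrite inE => kj c0E; have := CNM_row_le_permV MJc0.
by rewrite c0E permK leqNgt kj.
Qed.

End LeafPermBounds.

Section DominatedByPerm.
Variables (n : nat) (s : 'S_n) (M : 'M[bool]_n).
Hypothesis xorM :
  forall p, vertex M p -> ~~ is_origin p -> has_above M p (+) has_left M p.
Hypothesis M_le_perm : forall i c, M i c -> c <= s i.
Hypothesis M_perm : forall i, M i (s i).
Hypothesis M_le_permV : forall i c, M i c -> i <= (s^-1)%g c.

Lemma children_perm_graph i : children M (i, s i) = set0.
Proof.
apply/setP => p; rewrite in_set0; apply/negP.
case/children_cases=> + _ _ [[_ [e l _]] | [_ [e l _]]]; rewrite /vertex -e /=.
- by move/M_le_permV; rewrite permK leqNgt l.
- by move/M_le_perm; rewrite leqNgt l.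
Qed.

Lemma has_left_no_above (i c c' : 'I_n) :
  M i c -> c < c' -> M i c' -> ~~ has_above M (i, c').
Proof.
move=> Mic cc' Mic'.
have left : has_left M (i, c') by apply/existsP; exists c; rewrite cc' Mic.
have not_origin : ~~ is_origin (i, c').
  by rewrite negb_and orbC -lt0n (leq_ltn_trans _ cc').
by have := @xorM (i, c') Mic' not_origin; rewrite left addbT.
Qed.

Lemma children_off_perm_graph i c : M i c -> s i != c ->
  exists r d : 'I_n, [/\ i < r, c < d & children M (i, c) = [set (r, c); (i, d)]].
Proof.
move=> Mic ne.
have ci : c < s i.
  by rewrite ltn_neqAle M_le_perm // andbT; apply: contra ne => /eqP/val_inj ->.
have ir : i < (s^-1)%g c.
  rewrite ltn_neqAle M_le_permV // andbT; apply: contra ne => /eqP/val_inj ->.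
  by rewrite permKV.
have below : (i < (s^-1)%g c) && M ((s^-1)%g c) c by rewrite ir -{2}(permKV s c) M_perm.
have right : (c < s i) && M i (s i) by rewrite ci M_perm.
have [r /andP [{}ir Mr] r_min] :=
  @arg_minnP _ _ (fun k : 'I_n => (i < k) && M k c) (fun k => val k) below.
have [d /andP [cd Md] d_min] :=
  @arg_minnP _ _ (fun k : 'I_n => (c < k) && M i k) (fun k => val k) right.
exists r, d; split => //.
have child_below : (r, c) \in children M (i, c).
  rewrite inE /parent_of /vertex /= Mr Mic /is_origin /= negb_and -lt0n.
  rewrite (leq_ltn_trans _ ir) //=.
  have -> : has_above M (r, c) by apply/existsP; exists i; rewrite ir Mic.
  rewrite eqxx ir; apply/forallP => k; apply/implyP => /andP [ik kr].
  by apply/negP => Mk; have := r_min k; rewrite ik Mk /= leqNgt kr => /(_ isT).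
have child_right : (i, d) \in children M (i, c).
  rewrite inE /parent_of /vertex /= Md Mic /is_origin /= negb_and orbC -lt0n.
  rewrite (leq_ltn_trans _ cd) //= (negbTE (has_left_no_above Mic cd Md)).
  rewrite eqxx cd; apply/forallP => k; apply/implyP => /andP [ck kd].
  by apply/negP => Mk; have := d_min k; rewrite ck Mk /= leqNgt kd => /(_ isT).
apply/setP => p; rewrite in_set2; apply/idP/idP; last by case/orP => /eqP ->.
move=> child_p; have [above | no_above] := boolP (has_above M p).
- rewrite (children_below_uniq child_p child_below) ?eqxx //.
  by apply/existsP; exists i; rewrite ir Mic.
- by rewrite (children_right_uniq child_p child_right) ?eqxx ?orbT
    ?(has_left_no_above Mic cd Md).
Qed.

Lemma card_children_dominated i c :
  M i c -> #|children M (i, c)| = if s i == c then 0 else 2.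
Proof.
move=> Mic; have [<- | ne] := eqVneq (s i) c.
  by rewrite children_perm_graph cards0.
have [r [d [ir _ ->]]] := children_off_perm_graph Mic ne.
by rewrite cards2; case: eqP => // -[ri _]; move: ir; rewrite ri ltnn.
Qed.

Lemma dominated_CNM (n_gt0 : 0 < n) : M (Ordinal n_gt0) (Ordinal n_gt0) ->
  is_CNM M /\ leaf_matrix M = perm_bmx s.
Proof.
move=> M00; split.
  split; first by exists (Ordinal n_gt0, Ordinal n_gt0).
  split; first exact: xorM.
  split; first by move=> i; exists (s i).
  split; first by move=> c; exists ((s^-1)%g c); rewrite -{2}(permKV s c).
  move=> [i c] /card_children_dominated ->.
  by case: eqP; [left | right].
apply/matrixP => i c; rewrite !mxE /is_leaf /vertex /=.
case Mic: (M i c); last by apply/esym/negbTE; apply: contraFN Mic => /eqP <-.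
by rewrite card_children_dominated //=; case: (s i == c).
Qed.

End DominatedByPerm.

Lemma card_ord_lt n m : m <= n -> #|[set k : 'I_n | k < m]| = m.
Proof.
move=> mn; have widen_inj : injective (widen_ord mn).
  by move=> k k' /(congr1 val) /= /val_inj.
rewrite -[RHS]card_ord -(card_imset _ widen_inj).
apply: eq_card => k; rewrite inE; apply/idP/imsetP => [km | [k' _ ->] /=].
  by exists (Ordinal km) => //; apply: val_inj.
exact: ltn_ord.
Qed.

Lemma inj_prefix_leq n (f : 'I_n -> 'I_n) a b : injective f ->
  a <= n -> b <= n -> (forall k : 'I_n, k < a -> f k < b) -> a <= b.
Proof.
move=> inj_f an bn f_ab; rewrite -(card_ord_lt an) -(card_ord_lt bn).
rewrite -(card_imset _ inj_f); apply/subset_leq_card/subsetP => x /imsetP [k].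
by rewrite !inE => /f_ab ? ->.
Qed.

Section Staircase.
Variables (n : nat) (s : 'S_n).

Definition col_top (i c : 'I_n) : bool :=
  (c <= s i) && [forall k : 'I_n, (k < i) ==> (s k < c)].

Definition lr_max (i : 'I_n) : bool := [forall k : 'I_n, (k < i) ==> (s k < s i)].

(* For a left-to-right maximum i, the column of row_left is min_{k >= i} s k. *)
Definition row_left (i c : 'I_n) : bool :=
  if lr_max i then (i <= (s^-1)%g c) && [forall k : 'I_n, (i <= k) ==> (c <= s k)]
  else s i == c.

Definition staircase : 'M[bool]_n := \matrix_(i, c) (col_top i c || row_left i c).

Lemma staircaseE i c : staircase i c = col_top i c || row_left i c.
Proof. by rewrite mxE. Qed.

Lemma col_top_lr_max i c : col_top i c -> lr_max i.
Proof.
case/andP => ci /forallP top; apply/forallP => k; apply/implyP => ki.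
by have /implyP/(_ ki)/leq_trans := top k; apply.
Qed.

Lemma staircase_le_perm i c : staircase i c -> c <= s i.
Proof.
rewrite staircaseE /row_left => /orP [/andP [] // | ].
case: ifP => _; last by move/eqP ->.
by case/andP => _ /forallP /(_ i); rewrite leqnn.
Qed.

Lemma staircase_perm i : staircase i (s i).
Proof.
rewrite staircaseE /row_left; case: ifP => [lr | _]; last by rewrite eqxx orbT.
by apply/orP; left; rewrite /col_top leqnn.
Qed.

Lemma staircase_le_permV i c : staircase i c -> i <= (s^-1)%g c.
Proof.
rewrite staircaseE /row_left => /orP [/andP [_ /forallP top] | ].
  rewrite leqNgt; apply/negP => ci.
  by have := top ((s^-1)%g c); rewrite ci permKV ltnn.
by case: ifP => _; [case/andP | move/eqP <-; rewrite permK].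
Qed.

Lemma col_top_no_above i c : col_top i c -> ~~ has_above staircase (i, c).
Proof.
case/andP => _ /forallP top; apply/existsP => -[k /andP [ki Mkc]].
have /implyP/(_ ki) := top k.
by rewrite ltnNge (staircase_le_perm Mkc).
Qed.

Lemma not_col_top_has_above i c :
  staircase i c -> ~~ col_top i c -> has_above staircase (i, c).
Proof.
move=> Mic not_top.
have [t ct t_min] :=
  @arg_minnP _ _ (fun k : 'I_n => c <= s k) (fun k => val k) (staircase_le_perm Mic).
have top_t : col_top t c.
  rewrite /col_top ct; apply/forallP => k; apply/implyP => kt.
  by rewrite ltnNge; apply: contraL kt => /t_min; rewrite -leqNgt.
apply/existsP; exists t; rewrite staircaseE top_t andbT ltn_neqAle.
rewrite (t_min _ (staircase_le_perm Mic)) andbT.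
by apply: contraNneq not_top => /val_inj /= <-.
Qed.

Lemma row_left_no_left i c : row_left i c -> ~~ has_left staircase (i, c).
Proof.
rewrite /row_left; case: ifP => lr.
  case/andP => _ /forallP low; apply/existsP => -[k /andP [kc /staircase_le_permV ik]].
  by have /implyP/(_ ik) := low ((s^-1)%g k); rewrite permKV leqNgt kc.
move/eqP <-; apply/existsP => -[k /andP [ki]]; rewrite staircaseE.
case/orP => [/col_top_lr_max | ]; first by rewrite lr.
by rewrite /row_left lr => /eqP ki_eq; move: ki; rewrite ki_eq ltnn.
Qed.

Lemma not_row_left_has_left i c :
  staircase i c -> ~~ row_left i c -> has_left staircase (i, c).
Proof.
move=> Mic not_left.
have top : col_top i c by move: Mic not_left; rewrite staircaseE => /orP [] // ->.
have lr := col_top_lr_max top.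
move: not_left; rewrite /row_left lr (staircase_le_permV Mic) negb_forall.
case/existsP => k0; rewrite negb_imply -ltnNge => /andP [ik0 k0c].
have [m im m_min] :=
  @arg_minnP _ _ (fun k : 'I_n => i <= k) (fun k => val (s k)) ik0.
apply/existsP; exists (s m); rewrite (leq_ltn_trans (m_min _ ik0) k0c).
rewrite staircaseE /row_left lr permK im /=; apply/orP; right.
by apply/forallP => k; apply/implyP => /m_min.
Qed.

Lemma col_top_row_left_origin i c : irreducible_perm s ->
  col_top i c -> row_left i c -> is_origin (i, c).
Proof.
move=> irr top; rewrite /row_left (col_top_lr_max top).
case/andP: top => _ /forallP top /andP [_ /forallP low].
have [i_le_n c_le_n] := (ltnW (ltn_ord i), ltnW (ltn_ord c)).
have i_le_c : i <= c.
  apply: (inj_prefix_leq (@perm_inj _ s) i_le_n c_le_n) => k ki.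
  exact: (implyP (top k) ki).
have c_le_i : c <= i.
  apply: (inj_prefix_leq (@perm_inj _ (s^-1)%g) c_le_n i_le_n) => k kc.
  rewrite ltnNge; apply: contraL kc => /(implyP (low _)).
  by rewrite permKV -leqNgt.
have ci : c = i :> nat by apply/eqP; rewrite eqn_leq c_le_i i_le_c.
rewrite /is_origin /= ci andbb; apply/negPn/negP; rewrite -lt0n => i_gt0.
apply: irr; exists i; split => //.
apply/eqP; rewrite eqEcard card_imset ?leqnn ?andbT; last exact: perm_inj.
apply/subsetP => x /imsetP [k]; rewrite !inE => ki ->.
by rewrite -ci (implyP (top k) ki).
Qed.

Lemma staircase_xor p : irreducible_perm s -> vertex staircase p -> ~~ is_origin p ->
  has_above staircase p (+) has_left staircase p.
Proof.
case: p => i c irr Mic not_origin; have [top | not_top] := boolP (col_top i c).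
  have not_left : ~~ row_left i c.
    by apply: contra not_origin; apply: col_top_row_left_origin.
  by rewrite (negbTE (col_top_no_above top)) (not_row_left_has_left Mic not_left).
have left : row_left i c by move: Mic; rewrite /vertex staircaseE (negbTE not_top).
by rewrite (not_col_top_has_above Mic not_top) (negbTE (row_left_no_left left)).
Qed.

Lemma staircase00 (n_gt0 : 0 < n) : staircase (Ordinal n_gt0) (Ordinal n_gt0).
Proof. by rewrite staircaseE /col_top leq0n; apply/orP; left; apply/forallP. Qed.

End Staircase.

Theorem theorem3p1 (n : nat) (hn : (1 <= n)%N) (s : 'S_n) :
  (exists M : 'M[bool]_n, is_CNM M /\ leaf_matrix M = perm_bmx s)
  <-> irreducible_perm s.
Proof.
split=> [[M [cnmM leafM]] | irr]; first exact: CNM_perm_irreducible cnmM leafM.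
exists (staircase s); apply: (dominated_CNM _ _ _ _ (staircase00 s hn)).
- by move=> p; apply: staircase_xor.
- exact: staircase_le_perm.
- exact: staircase_perm.
- exact: staircase_le_permV.
Qed.
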